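(* Let $n\ge2$, let $k\in\mathbb{N}$ be the exponent of the largest power of $2$ dividing $n$, let $n_0=n/2^k$, and let $n_0=\sum_{i=1}^{\ell}2^{m_i}$ with $\ell\ge1$ and $m_1>\cdots>m_{\ell-1}>m_\ell=0$ be its binary expansion. (a) If $\ell=1$ (i.e. $n=2^k$), then $QB(n)=\{(n/2,n/2)\}$. (b) If $\ell>1$, then $QB(n)$ consists exactly of the following pairs, which are pairwise distinct: (b.1) the pair $\bigl(2^k(\sum_{i=1}^{\ell-1}2^{m_i-1}+1),\ 2^k\sum_{i=1}^{\ell-1}2^{m_i-1}\bigr)$; (b.2) for every $j\in\{2,\dots,\ell-1\}$ with $m_j>m_{j+1}+1$, the pair $\bigl(2^k(\sum_{i=1}^{j-1}2^{m_i-1}+2^{m_j}),\ n-2^k(\sum_{i=1}^{j-1}2^{m_i-1}+2^{m_j})\bigr)$; (b.3) for every $j\in\{2,\dots,\ell-1\}$ with $m_j<m_{j-1}-1$, the pair $\bigl(n-2^k\sum_{i=1}^{j-1}2^{m_i-1},\ 2^k\sum_{i=1}^{j-1}2^{m_i-1}\bigr)$; (b.4) if $k\ge1$, the pair $(n/2,n/2)$.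
   Context: Bifurcating trees: rooted trees in which every internal node has exactly two children; $\mathcal{T}_n$ is the set of isomorphism classes of bifurcating trees with $n$ leaves. The Colless index is $\mathcal{C}(T)=\sum_{v}|\kappa_T(v_1)-\kappa_T(v_2)|$, summed over internal nodes $v$ with children $v_1,v_2$, where $\kappa_T(w)$ is the number of leaves descending from $w$; $c_n=\min\{\mathcal{C}(T):T\in\mathcal{T}_n\}$. For $n\ge2$, $QB(n)=\{(n_a,n_b)\in\mathbb{N}^2: n_a\ge n_b\ge1,\ n_a+n_b=n,\ c_{n_a}+c_{n_b}+n_a-n_b=c_n\}$. *)

From mathcomp Require Import all_boot.
Set Implicit Arguments. Unset Strict Implicit. Unset Printing Implicit Defensive.

(* Isomorphism classes are not quotiented: the minimum Colless index over
   all trees equals the minimum over isomorphism classes. *)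
Inductive btree : Type := Leaf | Node of btree & btree.

Fixpoint leaves (T : btree) : nat :=
  match T with Leaf => 1 | Node l r => leaves l + leaves r end.

Definition absdiff (a b : nat) : nat := (a - b) + (b - a).

Fixpoint colless (T : btree) : nat :=
  match T with
  | Leaf => 0
  | Node l r => absdiff (leaves l) (leaves r) + colless l + colless r
  end.

Fixpoint all_trees (d : nat) : seq btree :=
  match d with
  | 0 => [:: Leaf]
  | d'.+1 => Leaf :: [seq Node l r | l <- all_trees d', r <- all_trees d']
  end.

(* A tree with n leaves has height < n, hence every tree with n leaves
   occurs in all_trees n.  c n = minimal Colless index over trees with
   n leaves (for n >= 1; value 0 for the empty case n = 0, never used). *)
Definition cmin (n : nat) : nat :=
  match [seq colless T | T <- all_trees n & leaves T == n] with
  | [::] => 0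
  | x :: s => foldr minn x s
  end.

Definition QB (n : nat) (p : nat * nat) : bool :=
  let: (na, nb) := p in
  [&& nb <= na, 1 <= nb, na + nb == n & cmin na + cmin nb + (na - nb) == cmin n].

Definition Spart (m : nat -> nat) (j : nat) : nat :=
  \sum_(1 <= i < j) 2 ^ (m i - 1).

Definition QB_list (n k l : nat) (m : nat -> nat) : seq (nat * nat) :=
  (2 ^ k * (Spart m l + 1), 2 ^ k * Spart m l)
  :: [seq (2 ^ k * (Spart m j + 2 ^ m j), n - 2 ^ k * (Spart m j + 2 ^ m j))
       | j <- iota 2 (l - 2) & m (j.+1) + 1 < m j]
  ++ [seq (n - 2 ^ k * Spart m j, 2 ^ k * Spart m j)
       | j <- iota 2 (l - 2) & m j < m (j.-1) - 1]
  ++ (if 1 <= k then [:: (n %/ 2, n %/ 2)] else [::]).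

(* The minimal Colless index satisfies c_(2t) = 2 c_t and c_(2t+1) = c_t + c_(t+1) + 1, and
   c_(a+b) <= c_a + c_b + |a - b| for all a, b, so QB(n) consists of the splits of n on which
   this inequality is tight.  Tightness is invariant under doubling both parts, and a split of an
   even number into two odd parts is tight only when the parts are equal; hence
   QB(2t) = 2 QB(t) ∪ {(t, t)}, which reduces everything to the odd part n0.
   Write n0 = 2 S_j + R_j, where 2 S_j and R_j are the head and tail sums of its binary
   expansion.  If the smaller part b satisfies S_j <= b < S_(j+1), both parts are at least the
   multiple S_j of 2^(m_j), and tightness is decided inside one block of length 2^(m_j): either
   b = S_j, possible iff S_j / 2^(m_j) is even, i.e. m_j < m_(j-1) - 1 (pairs (b.3)), or the
   larger part is S_j + 2^(m_j), possible iff 2 R_(j+1) < 2^(m_j), i.e. m_(j+1) + 1 < m_j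
   (pairs (b.2)).  The last block j = l yields the pair (b.1). *)

From HB Require Import structures.
From mathcomp Require Import all_boot zify.

(** * The minimal Colless index *)

Fixpoint btree_eq (t1 t2 : btree) : bool :=
  match t1, t2 with
  | Leaf, Leaf => true
  | Node a b, Node c d => btree_eq a c && btree_eq b d
  | _, _ => false
  end.

Lemma btree_eqP : Equality.axiom btree_eq.
Proof.
elim=> [|a IHa b IHb] [|c d] /=; try by constructor.
by apply: (iffP andP) => [[/IHa -> /IHb ->] | [<- <-]]; split; [apply/IHa | apply/IHb].
Qed.

HB.instance Definition _ := hasDecEq.Build btree btree_eqP.

Fixpoint height (T : btree) : nat :=
  match T with Leaf => 0 | Node l r => (maxn (height l) (height r)).+1 end.

Lemma leaves_gt0 T : 0 < leaves T.
Proof. by elim: T => //= l Hl r Hr; rewrite addn_gt0 Hl. Qed.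

Lemma height_lt_leaves T : height T < leaves T.
Proof. by elim: T => //= l Hl r Hr; have := leaves_gt0 l; have := leaves_gt0 r; lia. Qed.

Lemma mem_all_trees d T : height T <= d -> T \in all_trees d.
Proof.
elim: d T => [|d IH] [|l r] //= hT; rewrite in_cons; apply/orP; right.
by apply/allpairsP; exists (l, r); split => //=; apply: IH; lia.
Qed.

Lemma foldr_minn_le x s y : y \in x :: s -> foldr minn x s <= y.
Proof.
elim: s y => [|z s IH] y /=; first by rewrite inE => /eqP ->.
rewrite geq_min !inE => /or3P [/eqP -> | /eqP -> | ys].
- by rewrite IH ?mem_head ?orbT.
- by rewrite leqnn.
- by rewrite IH ?inE ?ys ?orbT.
Qed.

Lemma foldr_minn_mem x s : foldr minn x s \in x :: s.
Proof.
elim: s => [|z s IH] /=; first exact: mem_head.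
rewrite /minn; case: ifP => _; first by rewrite !inE eqxx orbT.
by move: IH; rewrite !inE => /orP [-> | ->]; rewrite ?orbT.
Qed.

Definition colless_values n := [seq colless T | T <- all_trees n & leaves T == n].

Lemma cmin_values n : cmin n = if colless_values n is x :: s then foldr minn x s else 0.
Proof. by []. Qed.

Lemma colless_mem_values T : colless T \in colless_values (leaves T).
Proof.
apply/mapP; exists T => //; rewrite mem_filter eqxx.
exact/mem_all_trees/ltnW/height_lt_leaves.
Qed.

Lemma cmin_le_colless T : cmin (leaves T) <= colless T.
Proof.
have := colless_mem_values T; rewrite cmin_values.
by case: (colless_values _) => [//|x s]; apply: foldr_minn_le.
Qed.

Lemma cmin_attained n : 0 < n -> exists2 T, leaves T = n & colless T = cmin n.
Proof.
move=> n_gt0; have [T leavesT] : exists T, leaves T = n.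
  exists (iter n.-1 (Node Leaf) Leaf); rewrite -[RHS](prednK n_gt0).
  by elim: n.-1 => //= k ->.
have := colless_mem_values T; rewrite leavesT cmin_values.
case E: (colless_values n) => [//|x s] _.
have := foldr_minn_mem x s; rewrite -E => /mapP [T' + ->].
by rewrite mem_filter => /andP [/eqP <- _]; exists T'.
Qed.

(* The fuel makes the recursion structural; n units always suffice (crec_fuel_enough). *)
Fixpoint crec_fuel (f n : nat) : nat :=
  match f with
  | 0 => 0
  | f.+1 => if n <= 1 then 0 else
            if odd n then crec_fuel f n./2 + crec_fuel f n./2.+1 + 1
            else 2 * crec_fuel f n./2
  end.

Definition crec n := crec_fuel n n.

Lemma crec_fuel_enough f g n : n <= f -> n <= g -> crec_fuel f n = crec_fuel g n.
Proof.
elim: f g n => [|f IH] [|g] n //= nf ng; try by have -> : n = 0 by lia.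
case: ifP => // /negbT; rewrite -ltnNge => n_gt1.
by case: ifP => n_odd; rewrite !(IH g) //; lia.
Qed.

Lemma crec0 : crec 0 = 0. Proof. by []. Qed.
Lemma crec1 : crec 1 = 0. Proof. by []. Qed.

Lemma crecE n : 1 < n ->
  crec n = if odd n then crec n./2 + crec n./2.+1 + 1 else 2 * crec n./2.
Proof.
case: n => [|n] // n_gt1; rewrite {1}/crec /= leqNgt n_gt1 /=.
have fuel k : k <= n -> crec_fuel n k = crec k by move=> kn; apply: crec_fuel_enough.
by case: ifP => n_odd; rewrite !fuel //; lia.
Qed.

Lemma crec_double t : crec (2 * t) = 2 * crec t.
Proof.
case: (posnP t) => [-> // | t_gt0].
rewrite crecE; last lia.
by rewrite oddM andFb; have -> : (2 * t)./2 = t by lia.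
Qed.

(* The summand (0 < t) makes the identity hold at t = 0 as well, where crec 1 = 0. *)
Lemma crec_odd t : crec (2 * t + 1) = crec t + crec t.+1 + (0 < t).
Proof.
case: (posnP t) => [-> // | t_gt0].
rewrite crecE; last lia.
by rewrite oddD oddM andFb; have -> : (2 * t + 1)./2 = t by lia.
Qed.

Lemma even_or_odd a : exists x, a = 2 * x \/ a = 2 * x + 1.
Proof. by exists a./2; lia. Qed.

Lemma crec_add_le a b : crec (a + b) <= crec a + crec b + absdiff a b.
Proof.
rewrite /absdiff; have [N] := ubnP (a + b); elim: N a b => // N IH a b.
rewrite ltnS => abN.
case: (posnP a) => [-> | a_gt0]; first by rewrite add0n crec0; lia.
case: (posnP b) => [-> | b_gt0]; first by rewrite addn0 crec0; lia.
wlog [[x a_even] | [x [y [a_odd b_odd]]]] : a b abN a_gt0 b_gt0 /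
    (exists x, a = 2 * x) \/ exists x y, a = 2 * x + 1 /\ b = 2 * y + 1.
  move=> W; have [x [a_even | a_odd]] := even_or_odd a; first by apply: W => //; left; exists x.
  have [y [b_even | b_odd]] := even_or_odd b; last by apply: W => //; right; exists x, y.
  suff : crec (b + a) <= crec b + crec a + ((b - a) + (a - b)) by rewrite addnC; lia.
  by apply: W => //; [lia | left; exists y].
- have [y [b_even | b_odd]] := even_or_odd b; subst a b.
  + by rewrite -mulnDr !crec_double; have := IH x y; lia.
  + have -> : 2 * x + (2 * y + 1) = 2 * (x + y) + 1 by lia.
    rewrite crec_odd crec_double.
    case: (posnP y) => [-> | y_gt0].
    * by rewrite muln0 add0n !addn0; have := IH x 1; rewrite addn1 crec1; lia.
    * by have := IH x y; have := IH x y.+1; rewrite addnS crec_odd; lia.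
- subst a b; case: (posnP (x + y)) => [xy0 | xy_gt0].
    by have [-> ->] : x = 0 /\ y = 0 by lia.
  have -> : 2 * x + 1 + (2 * y + 1) = 2 * (x + y).+1 by lia.
  have := IH x.+1 y; have := IH x y.+1.
  by rewrite addnS addSn crec_double !crec_odd; lia.
Qed.

Lemma cmin_crec n : cmin n = crec n.
Proof.
elim/ltn_ind: n => n IH.
case: (ltnP n 2) => [|n_ge2]; first by case: n {IH} => [|[|]].
have optimal_tree k : 0 < k < n -> exists2 T, leaves T = k & colless T = crec k.
  by case/andP=> k_gt0 kn; rewrite -IH //; apply: cmin_attained.
apply/eqP; rewrite eqn_leq; apply/andP; split.
- have [t [nE | nE]] := even_or_odd n.
  + have [T lT cT] := optimal_tree t ltac:(lia).
    have := cmin_le_colless (Node T T); rewrite /= lT cT /absdiff.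
    by rewrite (_ : t + t = n) ?nE ?crec_double; lia.
  + have [Ta la ca] := optimal_tree t.+1 ltac:(lia).
    have [Tb lb cb] := optimal_tree t ltac:(lia).
    have := cmin_le_colless (Node Ta Tb); rewrite /= la lb ca cb /absdiff.
    by rewrite (_ : t.+1 + t = n) ?nE ?crec_odd; lia.
- have [[|l r] /= lT cT] := cmin_attained _ (ltnW n_ge2); first lia.
  have l_gt0 := leaves_gt0 l; have r_gt0 := leaves_gt0 r.
  have := cmin_le_colless l; rewrite IH; last lia.
  have := cmin_le_colless r; rewrite IH; last lia.
  by have := crec_add_le (leaves l) (leaves r); rewrite -cT lT; lia.
Qed.

(** * Optimal splits *)

Definition opt_split a b : Prop := crec a + crec b + absdiff a b = crec (a + b).

Lemma QBE N a b : QB N (a, b) <-> [/\ b <= a, 0 < b, a + b = N & opt_split a b].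
Proof.
rewrite /QB /opt_split !cmin_crec /absdiff; split.
- by case/and4P => ba b_gt0 /eqP <- /eqP opt; split => //; lia.
- by case=> ba b_gt0 <- opt; rewrite ba b_gt0 eqxx /=; apply/eqP; lia.
Qed.

Lemma opt_splitC a b : opt_split a b <-> opt_split b a.
Proof. by rewrite /opt_split /absdiff (addnC b a); split; lia. Qed.

Lemma opt_split_nn a : opt_split a a.
Proof. by rewrite /opt_split /absdiff (_ : a + a = 2 * a) ?crec_double; lia. Qed.

Lemma opt_split_nSn a : 0 < a -> opt_split a a.+1.
Proof.
by move=> a_gt0; rewrite /opt_split /absdiff (_ : a + a.+1 = 2 * a + 1) ?crec_odd ?a_gt0; lia.
Qed.

Lemma opt_split_double a b : opt_split (2 * a) (2 * b) <-> opt_split a b.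
Proof. by rewrite /opt_split /absdiff -mulnDr !crec_double; split; lia. Qed.

Lemma opt_split_scale j a b : opt_split (2 ^ j * a) (2 ^ j * b) <-> opt_split a b.
Proof. by elim: j => [|j IH]; rewrite ?mul1n // expnS -!mulnA opt_split_double. Qed.

Lemma opt_split_even_odd x z : 0 < x -> 0 < z ->
  opt_split (2 * x) (2 * z + 1) <-> opt_split x z /\ opt_split x z.+1.
Proof.
move=> x_gt0 z_gt0; rewrite /opt_split.
have := crec_add_le x z; have := crec_add_le x z.+1.
rewrite (_ : 2 * x + (2 * z + 1) = 2 * (x + z) + 1) ?crec_odd ?crec_double ?addnS; last lia.
by rewrite /absdiff; split; lia.
Qed.

Lemma opt_split_even_1 x : opt_split (2 * x) 1 -> x = 1.
Proof.
rewrite /opt_split /absdiff crec1; case: (posnP x) => [-> // | x_gt0].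
by have := crec_add_le x 1; rewrite crec_double crec_odd crec1 addn1 /absdiff; lia.
Qed.

Lemma opt_split_odd_odd x z : opt_split (2 * x + 1) (2 * z + 1) -> x = z.
Proof.
rewrite /opt_split (_ : 2 * x + 1 + (2 * z + 1) = 2 * (x + z).+1) ?crec_double ?crec_odd; last lia.
have := crec_add_le x.+1 z; have := crec_add_le x z.+1; rewrite addnS addSn /absdiff.
by case: (posnP x) => [-> | ]; case: (posnP z) => [-> | ];
  rewrite ?crec0 ?crec1 ?add0n ?addn0 /=; lia.
Qed.

Lemma opt_split_add2 u : 0 < u -> opt_split u (u + 2) <-> ~~ odd u.
Proof.
move=> u_gt0; have [v [uE | uE]] := even_or_odd u; subst u.
- rewrite (_ : 2 * v + 2 = 2 * v.+1) ?opt_split_double ?oddM; last lia.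
  by split => [// | _]; apply: opt_split_nSn; lia.
- rewrite (_ : 2 * v + 1 + 2 = 2 * v.+1 + 1) ?oddD ?oddM; last lia.
  by split => [/opt_split_odd_odd | //]; lia.
Qed.

Definition block_spec M u r y : Prop :=
  0 < u /\ ((y = 0 /\ ~~ odd u) \/ (y = r - M /\ 2 * (r - M) < M)).

Lemma opt_split_block0 u r y : 2 <= r <= 4 -> 2 * y < 2 -> 0 < u \/ 0 < y ->
  opt_split (2 * u + y) (2 * u + (r - y)) <-> block_spec 2 u r y.
Proof.
move=> r_bounds y_lt; have -> : y = 0 by lia.
rewrite /block_spec addn0 subn0 => u_gt0.
have [-> | [-> | ->]] : r = 2 \/ r = 3 \/ r = 4 by lia.
- by rewrite -mulnSr opt_split_double; split => [_ | _]; [lia | apply: opt_split_nSn; lia].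
- rewrite (_ : 2 * u + 3 = 2 * u.+1 + 1) ?opt_split_even_odd; try lia.
  rewrite -addn2 opt_split_add2; last lia.
  by split => [[_ ?] | [? [[_ ?] | ?]]]; [lia | split => //; apply: opt_split_nSn | lia].
- rewrite (_ : 2 * u + 4 = 2 * (u + 2)); last lia.
  by rewrite opt_split_double opt_split_add2; lia.
Qed.

Section BlockStep.

Variable m : nat.
Local Notation M := (2 ^ m.+1).

Hypothesis IH : forall u r y, M <= r <= 2 * M -> 2 * y < M -> 0 < u \/ 0 < y ->
  opt_split (M * u + y) (M * u + (r - y)) <-> block_spec M u r y.

Lemma opt_split_block_step_odd u r y : 2 * M <= 2 * r + 1 <= 4 * M -> 2 * (2 * y + 1) < 2 * M ->
  opt_split (2 * (M * u) + (2 * y + 1)) (2 * (M * u) + (2 * r + 1 - (2 * y + 1))) <->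
  block_spec (2 * M) u (2 * r + 1) (2 * y + 1).
Proof.
move=> r_bounds y_lt.
rewrite (_ : 2 * (M * u) + (2 * r + 1 - (2 * y + 1)) = 2 * (M * u + (r - y))); last lia.
rewrite (_ : 2 * (M * u) + (2 * y + 1) = 2 * (M * u + y) + 1) ?(opt_splitC _ (2 * _)); last lia.
case: (posnP (M * u + y)) => [su0 | su_gt0].
  by rewrite su0; split => [/opt_split_even_1 | []]; lia.
rewrite opt_split_even_odd; try lia.
rewrite (opt_splitC _ (M * u + y)) (opt_splitC _ (M * u + y).+1) IH; try lia.
have -> : (M * u + y).+1 = M * u + y.+1 by lia.
have -> : M * u + (r - y) = M * u + (r.+1 - y.+1) by lia.
case: (ltnP (2 * y.+1) M) => [y1_lt | y1_ge].
  by rewrite IH /block_spec; lia.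
(* Now M u + y.+1 = 2^m (2 u + 1) is half a block above M u, out of reach of IH; the
   second split is decided by scaling down by 2^m instead. *)
have M_eq : M = 2 * y.+1 by lia.
have P_eq : 2 ^ m = y.+1 by move: M_eq; rewrite expnS; lia.
rewrite /block_spec; split => [[[u_gt0 [[y0 _] | ?]] opt2] | [u_gt0 [[? _] | [yE _]]]].
- have [rE | rE] : r = 2 \/ r = 3 by move: r_bounds; rewrite M_eq y0; lia.
    by lia.
  have lowE : M * u + y.+1 = 2 * u + 1 by rewrite M_eq y0; lia.
  have highE : M * u + (r.+1 - y.+1) = 2 * u.+1 + 1 by rewrite M_eq y0 rE; lia.
  by move: opt2; rewrite lowE highE => /opt_split_odd_odd; lia.
- by lia.
- by lia.
- split; first lia.
  have lowE' : M * u + y.+1 = 2 ^ m * (2 * u + 1) by rewrite expnS P_eq; lia.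
  have highE' : M * u + (r.+1 - y.+1) = 2 ^ m * (2 * u + 1).+1 by rewrite expnS P_eq; lia.
  by rewrite lowE' highE' opt_split_scale; apply: opt_split_nSn; lia.
Qed.

Lemma opt_split_block_step u r y : 2 * M <= r <= 4 * M -> 2 * y < 2 * M -> 0 < u \/ 0 < y ->
  opt_split (2 * M * u + y) (2 * M * u + (r - y)) <-> block_spec (2 * M) u r y.
Proof.
move=> r_bounds y_lt uy_gt0; rewrite -mulnA.
have [r' [rE | rE]] := even_or_odd r; have [y' [yE | yE]] := even_or_odd y; subst r y.
- rewrite -mulnDr (_ : 2 * r' - 2 * y' = 2 * (r' - y')) -?mulnDr ?opt_split_double ?IH; try lia.
  by rewrite /block_spec; lia.
- rewrite (_ : 2 * (M * u) + (2 * y' + 1) = 2 * (M * u + y') + 1); last lia.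
  rewrite (_ : 2 * (M * u) + (2 * r' - (2 * y' + 1)) = 2 * (M * u + (r' - y') - 1) + 1); last lia.
  by rewrite /block_spec; split => [/opt_split_odd_odd | ]; lia.
- rewrite -mulnDr (_ : 2 * (M * u) + (2 * r' + 1 - 2 * y') = 2 * (M * u + (r' - y')) + 1); last lia.
  rewrite opt_split_even_odd ?IH; try lia.
  rewrite (_ : (M * u + (r' - y')).+1 = M * u + (r'.+1 - y')) ?IH; try lia.
  by rewrite /block_spec; lia.
- exact: opt_split_block_step_odd.
Qed.

End BlockStep.

Lemma opt_split_block m u r y : 2 ^ m.+1 <= r <= 2 * 2 ^ m.+1 -> 2 * y < 2 ^ m.+1 ->
  0 < u \/ 0 < y ->
  opt_split (2 ^ m.+1 * u + y) (2 ^ m.+1 * u + (r - y)) <-> block_spec (2 ^ m.+1) u r y.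
Proof.
elim: m u r y => [|m IH] u r y; first exact: opt_split_block0.
rewrite [2 ^ m.+2]expnS (_ : 2 * (2 * 2 ^ m.+1) = 4 * 2 ^ m.+1) ?mulnA; last lia.
exact: opt_split_block_step.
Qed.

(** * The binary expansion of the odd part *)

Lemma Spart1 m : Spart m 1 = 0.
Proof. by rewrite /Spart big_geq. Qed.

Lemma SpartS m j : 0 < j -> Spart m j.+1 = Spart m j + 2 ^ (m j - 1).
Proof. by move=> j_gt0; rewrite /Spart big_nat_recr. Qed.

Lemma Spart_incr m i j : 0 < i <= j -> Spart m i + (j - i) <= Spart m j.
Proof.
case/andP=> i_gt0; elim: j => [|j IH] ij; first lia.
case: (ltnP i j.+1) => [lt_ij | ge_ij]; last by rewrite (_ : i = j.+1) ?subnn ?addn0; lia.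
by rewrite SpartS ?(leq_trans i_gt0) //; have := IH lt_ij; have := expn_gt0 2 (m j - 1); lia.
Qed.

Definition odd_QB_list n0 l m : seq (nat * nat) :=
  (Spart m l + 1, Spart m l)
  :: [seq (Spart m j + 2 ^ m j, n0 - (Spart m j + 2 ^ m j))
        | j <- iota 2 (l - 2) & m j.+1 + 1 < m j]
  ++ [seq (n0 - Spart m j, Spart m j) | j <- iota 2 (l - 2) & m j < m j.-1 - 1].

Lemma mem_map_iota2 (T : eqType) (f : nat -> T) (P : pred nat) l x :
  x \in [seq f j | j <- iota 2 (l - 2) & P j] <-> exists2 j, 1 < j < l & P j /\ x = f j.
Proof.
split.
- by case/mapP => j; rewrite mem_filter mem_iota => /andP [Pj jr] ->; exists j => //; lia.
- case=> j jl [Pj ->]; apply/mapP; exists j => //.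
  by rewrite mem_filter mem_iota Pj /=; lia.
Qed.

Lemma Spart_inj m i j : 0 < i -> 0 < j -> Spart m i = Spart m j -> i = j.
Proof.
move=> i_gt0 j_gt0 Sij; case: (ltngtP i j) => // [ij | ji].
- by have := Spart_incr m i j; lia.
- by have := Spart_incr m j i; lia.
Qed.

Section BinaryExpansion.

Variables (l : nat) (m : nat -> nat).
Hypothesis m_decr : forall i j, 1 <= i -> i < j -> j <= l -> m j < m i.
Hypothesis m_last : m l = 0.

Definition Rpart j := \sum_(j <= i < l.+1) 2 ^ m i.

Lemma RpartS j : j <= l -> Rpart j = 2 ^ m j + Rpart j.+1.
Proof. by move=> jl; rewrite /Rpart big_ltn. Qed.

Lemma Rpart_last : Rpart l = 1.
Proof. by rewrite RpartS // /Rpart big_geq // m_last. Qed.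

Lemma m_gt0 i : 0 < i < l -> 0 < m i.
Proof. by case/andP=> i_gt0 il; have := m_decr _ _ i_gt0 il (leqnn l); lia. Qed.

Lemma Rpart_bounds j : 0 < j <= l -> 2 ^ m j <= Rpart j < 2 ^ (m j).+1.
Proof.
move=> /andP [j_gt0 jl]; have [d] := ubnP (l - j); elim: d j j_gt0 jl => // d IH j j_gt0 jl dj.
case: (ltngtP j l) jl => [jl _ | // | -> _]; last by rewrite Rpart_last m_last.
have := IH j.+1 isT jl ltac:(lia).
have mj : m j.+1 < m j := m_decr _ _ j_gt0 (ltnSn j) jl.
have : 2 ^ (m j.+1).+1 <= 2 ^ m j by rewrite leq_exp2l.
by rewrite (RpartS j (ltnW jl)) [2 ^ (m j).+1]expnS; lia.
Qed.

Lemma Rpart_small j : 0 < j < l -> (2 * Rpart j.+1 < 2 ^ m j) = (m j.+1 + 1 < m j).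
Proof.
case/andP=> j_gt0 jl; have /andP [lo hi] := Rpart_bounds j.+1 jl.
apply/idP/idP => [R_small | m_gap].
- have : 2 ^ (m j.+1).+1 < 2 ^ m j by rewrite expnS; lia.
  by rewrite ltn_exp2l // addn1.
- have : 2 ^ (m j.+1).+2 <= 2 ^ m j by rewrite leq_exp2l //; lia.
  by rewrite !expnS in hi *; lia.
Qed.

Lemma Spart_dvd j : j <= l -> 2 ^ m j %| Spart m j.
Proof.
move=> jl; rewrite /Spart big_nat_cond; apply: dvdn_sum => i /andP [/andP [i_gt0 ij] _].
by rewrite dvdn_exp2l //; have := m_decr _ _ i_gt0 ij jl; lia.
Qed.

Lemma Spart_factor j : 1 < j <= l ->
  exists2 u, Spart m j = 2 ^ m j * u & 0 < u /\ (~~ odd u <-> m j < m j.-1 - 1).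
Proof.
case/andP=> j_gt1 jl; have mj : m j < m j.-1 by apply: m_decr; lia.
have /dvdnP [v Sv] := Spart_dvd j.-1 ltac:(lia).
have SE : Spart m j = Spart m j.-1 + 2 ^ (m j.-1 - 1) by rewrite -SpartS ?prednK //; lia.
set e := m j.-1 - 1 - m j; have mE : m j.-1 = (e + m j).+1 by rewrite /e; lia.
exists (2 ^ e * (2 * v + 1)).
  by rewrite SE Sv mE subn1 /= expnS expnD; nia.
split; first by rewrite muln_gt0 expn_gt0 addn1.
by case: e mE => [|e] mE; rewrite ?expnS oddM ?oddD ?oddM /=; lia.
Qed.

Variable n0 : nat.
Hypothesis n0_sum : n0 = \sum_(1 <= i < l.+1) 2 ^ m i.

Lemma n0_split j : 0 < j <= l -> n0 = 2 * Spart m j + Rpart j.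
Proof.
case/andP=> j_gt0 jl; rewrite n0_sum /Rpart /Spart (@big_cat_nat _ _ _ j) //=; last lia.
congr (_ + _); rewrite big_distrr big_nat_cond [RHS]big_nat_cond /=.
apply: eq_bigr => i /andP [/andP [i_gt0 ij] _].
by rewrite -expnS subn1 prednK // m_gt0 // i_gt0 (leq_trans ij).
Qed.

Definition pair_b2 j a b : Prop :=
  1 < j < l /\ m j.+1 + 1 < m j /\ a = Spart m j + 2 ^ m j /\ b = n0 - (Spart m j + 2 ^ m j).

Definition pair_b3 j a b : Prop :=
  1 < j < l /\ m j < m j.-1 - 1 /\ a = n0 - Spart m j /\ b = Spart m j.

Definition qb_tail j a b : Prop :=
  [\/ a = Spart m l + 1 /\ b = Spart m l,
       exists2 i, j <= i & pair_b2 i a b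
     | exists2 i, j <= i & pair_b3 i a b].

Lemma qb_tailS j a b : qb_tail j a b <-> [\/ qb_tail j.+1 a b, pair_b2 j a b | pair_b3 j a b].
Proof.
split.
- case=> [? | [i ji b2] | [i ji b3]]; first by do 2 constructor.
  + case: (ltngtP j i) ji => // [ji _ | -> _]; last exact: Or32.
    by constructor; apply: Or32; exists i.
  + case: (ltngtP j i) ji => // [ji _ | -> _]; last exact: Or33.
    by constructor; apply: Or33; exists i.
- case=> [[? | [i ji ?] | [i ji ?]] | b2 | b3].
  + exact: Or31.
  + by apply: Or32; exists i; first exact: ltnW.
  + by apply: Or33; exists i; first exact: ltnW.
  + by apply: Or32; exists j.
  + by apply: Or33; exists j.
Qed.

Lemma expn_m_pred j : 0 < j < l -> 2 ^ m j = 2 * 2 ^ (m j - 1).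
Proof. by move=> jl; rewrite -expnS subn1 prednK // m_gt0. Qed.

Lemma pair_b2_snd j a b : pair_b2 j a b -> Spart m j < b < Spart m j.+1.
Proof.
case=> /andP [j_gt1 jl] [gap [_ ->]].
have R_small : 2 * Rpart j.+1 < 2 ^ m j by rewrite Rpart_small ?gap //; lia.
have := Rpart_bounds j.+1 jl; have := expn_m_pred j ltac:(lia).
by rewrite (n0_split j) ?(RpartS j) ?SpartS; lia.
Qed.

Lemma qb_tail_ge j a b : 0 < j <= l -> qb_tail j a b -> Spart m j <= b.
Proof.
move=> jl [[_ ->] | [i ji /pair_b2_snd] | [i ji [ilt [_ [_ ->]]]]].
- by have := Spart_incr m j l; lia.
- by have := Spart_incr m j i; lia.
- by have := Spart_incr m j i; lia.
Qed.

Lemma qb_tail_valid a b : 1 < l -> qb_tail 1 a b -> [/\ 0 < b, b < a & a + b = n0].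
Proof.
move=> l_gt1 [[-> ->] | [i _ b2] | [i _ [/andP [i_gt1 il] [_ [-> ->]]]]].
- have := Spart_incr m 1 l; rewrite Spart1 (n0_split l) ?Rpart_last; last lia.
  by move=> ?; split; lia.
- have := pair_b2_snd _ _ _ b2; have := Spart_incr m 1 i.
  case: b2 => /andP [i_gt1 il] [gap [-> ->]]; have := expn_m_pred i.
  rewrite Spart1 (n0_split i) ?(RpartS i) ?SpartS; try lia.
  by move=> ? ? ?; split; lia.
- have := Spart_incr m 1 i; have := Rpart_bounds i; have := expn_gt0 2 (m i).
  rewrite Spart1 (n0_split i); try lia.
  by move=> ? ? ?; split; lia.
Qed.

Lemma opt_split_level j b : 0 < j < l -> Spart m j <= b < Spart m j.+1 -> 0 < b ->
  opt_split (n0 - b) b <-> pair_b2 j (n0 - b) b \/ pair_b3 j (n0 - b) b.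
Proof.
move=> jl /andP [Sb bS] b_gt0; have /andP [j_gt0 j_lt] := jl.
have [u Su u_spec] : exists2 u, Spart m j = 2 ^ m j * u &
    (j = 1 -> u = 0) /\ (1 < j -> 0 < u /\ (~~ odd u <-> m j < m j.-1 - 1)).
  case: (ltnP 1 j) => [j_gt1 | j_le1].
    have [u Su u_spec] := Spart_factor j ltac:(lia).
    by exists u => //; split => [ | _]; first lia.
  have -> : j = 1 by lia.
  by exists 0; rewrite ?Spart1 ?muln0.
have u_gt0 : 0 < Spart m j <-> 0 < u by rewrite Su muln_gt0 expn_gt0.
have R_small : 2 * Rpart j.+1 < 2 ^ m j <-> m j.+1 + 1 < m j by rewrite Rpart_small.
have pow := expn_m_pred j jl; have /andP [R_lo R_hi] := Rpart_bounds j ltac:(lia).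
rewrite expnS in R_hi.
rewrite SpartS // in bS; have n0E := n0_split j ltac:(lia).
have := opt_split_block (m j).-1 u (Rpart j) (b - Spart m j).
rewrite prednK ?m_gt0 // -Su (_ : Spart m j + (b - Spart m j) = b); last lia.
rewrite (_ : Spart m j + (Rpart j - (b - Spart m j)) = n0 - b); last lia.
move=> block; rewrite opt_splitC block; [ | lia | lia | lia].
have RE := RpartS j (ltnW j_lt).
rewrite /block_spec /pair_b2 /pair_b3; clear block Su.
case: (ltnP 1 j) => [j_gt1 | j_le1]; last first.
  by have u0 := u_spec.1; split => [[] | [[] | []]]; lia.
have [u_pos u_even] := u_spec.2 j_gt1; clear u_spec u_gt0.
split => [[_ [[y0 /u_even gap] | [yE R_lt]]] | [[_ [gap [_ bE]]] | [_ [/u_even ev [_ bE]]]]].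
- by right; lia.
- have gap : m j.+1 + 1 < m j by apply/R_small; lia.
  by left; lia.
- by have := R_small.2 gap; lia.
- by split => //; left; lia.
Qed.

Lemma opt_split_tail j b : 0 < j <= l -> Spart m j <= b -> 2 * b <= n0 -> 0 < b ->
  opt_split (n0 - b) b <-> qb_tail j (n0 - b) b.
Proof.
move=> /andP [j_gt0 jl]; have [d] := ubnP (l - j).
elim: d j j_gt0 jl => // d IH j j_gt0 jl dj Sb bn0 b_gt0.
case: (ltngtP j l) jl => [j_lt _ | // | jE _]; last first.
  have := n0_split l; rewrite Rpart_last -jE => /(_ ltac:(lia)) n0E.
  have bE : b = Spart m j by lia.
  rewrite (_ : n0 - b = b.+1); last lia.
  by split => _; [apply: Or31; rewrite -jE; lia | rewrite opt_splitC; apply: opt_split_nSn].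
rewrite qb_tailS; case: (ltnP b (Spart m j.+1)) => [b_lt | b_ge].
- have tail_lt : ~ qb_tail j.+1 (n0 - b) b by move/qb_tail_ge; lia.
  rewrite (opt_split_level j); [ | lia | lia | lia].
  by split => [[b2 | b3] | [/tail_lt [] | b2 | b3]]; [apply: Or32 | apply: Or33 | left | right].
- rewrite (IH j.+1) //; last lia.
  split => [? | [? // | /pair_b2_snd | [_ [_ [_ bE]]]]]; first exact: Or31.
    lia.
  by have := Spart_incr m j j.+1; lia.
Qed.

Lemma mem_odd_QB_list a b : (a, b) \in odd_QB_list n0 l m <-> qb_tail 1 a b.
Proof.
rewrite in_cons mem_cat; split.
- case/or3P => [/eqP [-> ->] | /mem_map_iota2 [j jl [gap [-> ->]]]
                            | /mem_map_iota2 [j jl [gap [-> ->]]]].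
  + exact: Or31.
  + by apply: Or32; exists j; first lia.
  + by apply: Or33; exists j; first lia.
- case=> [[-> ->] | [j _ [jl [gap [-> ->]]]] | [j _ [jl [gap [-> ->]]]]].
  + by rewrite eqxx.
  + by apply/or3P/Or32/mem_map_iota2; exists j.
  + by apply/or3P/Or33/mem_map_iota2; exists j.
Qed.

Lemma pair_b2_inj i j a a' b : pair_b2 i a b -> pair_b2 j a' b -> i = j.
Proof.
move=> b2i b2j; have [/andP [i_gt1 _] _] := b2i; have [/andP [j_gt1 _] _] := b2j.
move: b2i b2j => /pair_b2_snd bi /pair_b2_snd bj; case: (ltngtP i j) => // [ij | ji].
- by have := Spart_incr m i.+1 j; lia.
- by have := Spart_incr m j.+1 i; lia.
Qed.

Lemma pair_b2_Spart i j a b : 0 < j -> pair_b2 i a b -> b <> Spart m j.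
Proof.
move=> j_gt0 b2; have [/andP [i_gt1 _] _] := b2; move/pair_b2_snd: b2 => bi.
by case: (leqP j i) => ij; [have := Spart_incr m j i | have := Spart_incr m i.+1 j]; lia.
Qed.

Lemma uniq_odd_QB_list : uniq (odd_QB_list n0 l m).
Proof.
have b2_mem j : 1 < j < l -> m j.+1 + 1 < m j ->
    pair_b2 j (Spart m j + 2 ^ m j) (n0 - (Spart m j + 2 ^ m j)) by [].
rewrite /odd_QB_list cons_uniq mem_cat negb_or cat_uniq; apply/and3P; split.
- apply/andP; split; apply/negP => /mem_map_iota2 [j jl [gap [_ bE]]].
  + exact: (pair_b2_Spart j l _ _ ltac:(lia) (b2_mem j jl gap) (esym bE)).
  + by have := Spart_inj m j l; lia.
- rewrite map_inj_in_uniq ?filter_uniq ?iota_uniq // => i j.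
  rewrite !mem_filter !mem_iota => /andP [gi ri] /andP [gj rj] [_ bE].
  have il : 1 < i < l by lia.
  by apply: (pair_b2_inj _ _ _ _ _ (b2_mem i il gi)); rewrite bE; apply: b2_mem => //; lia.
- apply/andP; split.
  + apply/hasPn => _ /mem_map_iota2 [j jl [_ ->]]; apply/negP => /mem_map_iota2 [i il [gap [_ bE]]].
    exact: (pair_b2_Spart i j _ _ ltac:(lia) (b2_mem i il gap) (esym bE)).
  + rewrite map_inj_in_uniq ?filter_uniq ?iota_uniq // => i j.
    by rewrite !mem_filter !mem_iota => /andP [_ ri] /andP [_ rj] [_ /Spart_inj]; apply; lia.
Qed.

Lemma odd_QB_list_lt a b : 1 < l -> (a, b) \in odd_QB_list n0 l m -> b < a.
Proof. by move=> l_gt1 /mem_odd_QB_list /(qb_tail_valid _ _ l_gt1) []. Qed.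

Lemma QB_odd p : 1 < l -> QB n0 p <-> p \in odd_QB_list n0 l m.
Proof.
case: p => a b l_gt1; rewrite mem_odd_QB_list QBE; split.
- case=> ba b_gt0 abn0; rewrite (_ : a = n0 - b); last lia.
  by move/opt_split_tail; apply; rewrite ?Spart1; lia.
- move=> tail; have [b_gt0 ba abn0] := qb_tail_valid _ _ l_gt1 tail.
  split => //; first exact: ltnW.
  move: tail; rewrite (_ : a = n0 - b); last lia.
  by move/opt_split_tail; apply; rewrite ?Spart1; lia.
Qed.

End BinaryExpansion.

(** * The even part *)

Definition scale2 k (p : nat * nat) := (2 ^ k * p.1, 2 ^ k * p.2).

Lemma QB_list_scale {n k n0} l m : n = 2 ^ k * n0 ->
  QB_list n k l m =
  map (scale2 k) (odd_QB_list n0 l m) ++ (if 0 < k then [:: (n %/ 2, n %/ 2)] else [::]).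
Proof.
move=> nE; rewrite /QB_list /odd_QB_list /= map_cat -!map_comp -catA; congr (_ :: _ ++ _ ++ _).
- by apply: eq_map => j; rewrite /scale2 /= nE mulnBr.
- by apply: eq_map => j; rewrite /scale2 /= nE mulnBr.
Qed.

Lemma QB_double t a b : 0 < t -> QB (2 * t) (a, b) <->
  (exists2 q, QB t q & (a, b) = scale2 1 q) \/ (a = t /\ b = t).
Proof.
move=> t_gt0; rewrite QBE; split.
- case=> ba b_gt0 abt opt.
  have [a' [aE | aE]] := even_or_odd a; have [b' [bE | bE]] := even_or_odd b; subst a b.
  + left; exists (a', b'); last by rewrite /scale2 expn1.
    by rewrite QBE; split; [lia | lia | lia | apply/opt_split_double].
  + by exfalso; lia.
  + by exfalso; lia.
  + by right; move/opt_split_odd_odd: opt; lia.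
- case=> [[[a' b']] /QBE [ba b_gt0 abt opt] [-> ->] | [-> ->]].
  + by rewrite expn1; split; [lia | lia | lia | apply/opt_split_double].
  + by split => //; [lia | apply: opt_split_nn].
Qed.

Lemma scale2S k q : scale2 1 (scale2 k q) = scale2 k.+1 q.
Proof. by rewrite /scale2 /= expn1 expnS !mulnA. Qed.

Lemma QB_pow2 k n0 p : 0 < n0 -> QB (2 ^ k * n0) p <->
  (exists2 q, QB n0 q & p = scale2 k q) \/ (0 < k /\ p = (2 ^ k.-1 * n0, 2 ^ k.-1 * n0)).
Proof.
move=> n0_gt0; elim: k p => [|k IH] [a b].
  rewrite mul1n /scale2; split => [QBab | [[[a' b'] QBq ->] | [] //]].
  - by left; exists (a, b); rewrite ?mul1n.
  - by rewrite !mul1n.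
rewrite expnS -mulnA QB_double ?muln_gt0 ?expn_gt0 //; split.
- case=> [[q /IH [[q' QBq' ->] | [k_gt0 ->]] ->] | [-> ->]]; last by right.
  + by left; exists q'; rewrite ?scale2S.
  + by right; rewrite /scale2 /= expn1 mulnA -expnS prednK.
- case=> [[q QBq ->] | [_ [-> ->]]]; last by right.
  by left; exists (scale2 k q); rewrite ?scale2S //; apply/IH; left; exists q.
Qed.

Lemma scale2_inj k : injective (scale2 k).
Proof.
by move=> [a b] [a' b'] [/eqP + /eqP]; rewrite !eqn_pmul2l ?expn_gt0 // => /eqP -> /eqP ->.
Qed.

Lemma mem_scale2_cat k s x p :
  p \in map (scale2 k) s ++ (if 0 < k then [:: (x, x)] else [::]) <->
  (exists2 q, q \in s & p = scale2 k q) \/ (0 < k /\ p = (x, x)).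
Proof.
rewrite mem_cat; split.
- case/orP => [/mapP [q q_in ->] | ]; first by left; exists q.
  by case: ifP => // k_gt0; rewrite inE => /eqP ->; right.
- case=> [[q q_in ->] | [k_gt0 ->]]; first by rewrite map_f.
  by rewrite k_gt0 mem_head orbT.
Qed.

Lemma uniq_scale2_diag k s x : uniq s -> {in s, forall p, p.2 < p.1} ->
  uniq (map (scale2 k) s ++ (if 0 < k then [:: (x, x)] else [::])).
Proof.
move=> s_uniq below; rewrite cat_uniq map_inj_uniq ?s_uniq; last exact: scale2_inj.
case: ifP => // _; rewrite has_seq1 /= andbT; apply/mapP => -[[a b] /below /= ba].
by rewrite /scale2 /= => -[-> /eqP]; rewrite eqn_pmul2l ?expn_gt0 // => /eqP ab; lia.
Qed.

Theorem proposition3 (n k l : nat) (m : nat -> nat) :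
  2 <= n ->
  k = logn 2 n ->
  1 <= l ->
  (forall i j, 1 <= i -> i < j -> j <= l -> m j < m i) ->
  m l = 0 ->
  n %/ 2 ^ k = \sum_(1 <= i < l.+1) 2 ^ m i ->
  (l = 1 -> forall p : nat * nat, QB n p <-> p = (n %/ 2, n %/ 2)) /\
  (1 < l -> (forall p : nat * nat, QB n p <-> p \in QB_list n k l m)
            /\ uniq (QB_list n k l m)).
Proof.
move=> n_ge2 kE l_gt0 m_decr m_last.
have nE : n = 2 ^ k * (n %/ 2 ^ k) by rewrite mulnC divnK // kE pfactor_dvdnn.
move: (n %/ 2 ^ k) nE => n0 nE n0E.
have n0_gt0 : 0 < n0 by case: n0 nE {n0E} => [|//]; rewrite muln0; lia.
have half : 0 < k -> n %/ 2 = 2 ^ k.-1 * n0.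
  by move=> k_gt0; rewrite nE -(prednK k_gt0) expnS -mulnA mulKn.
have QBn p : QB n p <->
    (exists2 q, QB n0 q & p = scale2 k q) \/ (0 < k /\ p = (n %/ 2, n %/ 2)).
  by rewrite {1}nE QB_pow2 //; split => -[? | [k_gt0 ->]]; by [left | right; rewrite half].
split => [l1 p | l_gt1].
- have n01 : n0 = 1 by move: m_last; rewrite n0E l1 big_nat1 => ->.
  rewrite QBn; split => [[[[a b] /QBE [? ? ? _]] | [_ ->]] // | ->]; first lia.
  by right; split => //; rewrite lt0n; apply: contraTneq n_ge2 => k0; rewrite nE k0 n01.
- have QBn0 q : QB n0 q <-> q \in odd_QB_list n0 l m := QB_odd _ _ m_decr m_last _ n0E q l_gt1.
  rewrite (QB_list_scale l m nE); split.
  + move=> p; rewrite QBn mem_scale2_cat.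
    by split => -[[q /QBn0 q_in ->] | ?]; by [left; exists q | right].
  + apply: uniq_scale2_diag; first exact: (uniq_odd_QB_list _ _ m_decr m_last _ n0E).
    by move=> [a b]; apply: (odd_QB_list_lt _ _ m_decr m_last _ n0E _ _ l_gt1).
Qed.
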